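(* Let $n\ge 3$ and let $A \in \mathcal{G}_s^{n\times n}(\{0,t\})$, and write $\det A = \sum_{j=0}^{n} c_j s^{n-j}t^j$ as a polynomial in the indeterminates $s,t$. If the coefficient $c_2$ of $s^{n-2}t^2$ is zero, then the coefficient $c_3$ of $s^{n-3}t^3$ satisfies $|c_3| \le \lfloor n/2\rfloor\,\lfloor (n-1)/2\rfloor$.
   Context: $\mathcal{G}_s^{n\times n}(\{0,t\})$ denotes the set of all $n\times n$ upper Hessenberg matrices $A=(a_{ij})$ with $a_{i+1,i} = s$ for $1\le i\le n-1$, $a_{ij}=0$ for $i > j+1$, and $a_{ij}\in\{0,t\}$ for all $i \le j$. Here $s,t$ are treated as indeterminates, so $\det A$ is a homogeneous polynomial of degree $n$ in $s,t$ with integer coefficients. *)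

From HB Require Import structures.
From mathcomp Require Import all_boot all_order all_algebra.
Set Implicit Arguments. Unset Strict Implicit. Unset Printing Implicit Defensive.
Import GRing.Theory Num.Theory.
Local Open Scope ring_scope.

(* The bivariate integer polynomial ring Z[s,t] is modelled as {poly {poly int}}:
   the outer variable is t, the inner variable is s. *)
Definition Zst := {poly {poly int}}.

Definition var_s : Zst := ('X : {poly int})%:P.
Definition var_t : Zst := 'X.

Definition in_G_st (n : nat) (A : 'M[Zst]_n) : Prop :=
  forall i j : 'I_n,
    (nat_of_ord i = (nat_of_ord j).+1 -> A i j = var_s) /\
    (((nat_of_ord j).+1 < nat_of_ord i)%N -> A i j = 0) /\
    ((nat_of_ord i <= nat_of_ord j)%N -> A i j = 0 \/ A i j = var_t).

Definition coef_st (p : Zst) (a b : nat) : int := (p`_b)`_a.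

(* Expanding an upper Hessenberg determinant with subdiagonal s along its last
   row gives D_{k+1} = sum_{i<=k} (-s)^(k-i) a_{ik} D_i for its leading minors
   D_k.  When every entry on or above the diagonal is 0 or t, the coefficient of
   s^(n-j) t^j in D_n is therefore (-1)^(n-j) times the number of chains
   0 = p_0 < p_1 < ... < p_j = n with a_{p_(l-1), p_l - 1} = t for all l.
   For j = 3 such a chain is fixed by its middle indices p < q, where
   a_{0,p-1} = t and a_{q,n-1} = t.  If c_2 = 0 no index carries both
   properties, so the sets X of admissible p and Y of admissible q are
   disjoint in {1, ..., n-1} and |c_3| <= |X| |Y| <= floor(n/2) floor((n-1)/2). *)

From mathcomp Require Import all_boot all_order all_algebra zify.
Import GRing.Theory Num.Theory.

Set Implicit Arguments.
Unset Strict Implicit.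
Unset Printing Implicit Defensive.
Local Open Scope ring_scope.

Definition hess_mx (R : Type) (a : nat -> nat -> R) (k : nat) : 'M[R]_k :=
  \matrix_(i, j) a i j.

Definition hess_minor (R : comPzRingType) (a : nat -> nat -> R) (k : nat) : R :=
  \det (hess_mx a k).

Section HessenbergDeterminant.

Variables (R : comPzRingType) (s : R) (a : nat -> nat -> R).
Hypothesis a_subdiag : forall j, a j.+1 j = s.
Hypothesis a_below : forall i j, (j.+1 < i)%N -> a i j = 0.

Lemma det_hess_lastcol k (B : 'M[R]_k.+1) :
    (forall i j : 'I_k.+1, (j < k)%N -> B i j = a i j) ->
  \det B = \sum_(i < k.+1) (- s) ^+ (k - i) * B i ord_max * hess_minor a i.
Proof.
elim: k B => [|k IHk] B B_a.
  rewrite (expand_det_row B ord0) !big_ord1 /cofactor /hess_minor !det_mx00.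
  by rewrite expr0 !mulr1 mul1r; congr (B _ _); apply/val_inj.
rewrite (expand_det_row B ord_max) [in LHS]big_ord_recr [in LHS]big_ord_recr /=.
rewrite big1 ?add0r; last first.
  move=> j _; rewrite B_a /=; last exact: ltnW (ltn_ord j).
  by rewrite a_below ?mul0r // ltnS ltn_ord.
rewrite [in RHS]big_ord_recr /=.
rewrite subnn expr0 mul1r; congr (_ + _); last first.
  rewrite /cofactor /hess_minor addnn -signr_odd odd_double mul1r.
  congr (_ * \det _).
  by apply/matrixP => i j; rewrite !mxE B_a !lift_max.
rewrite B_a //= a_subdiag /cofactor (IHk (row' _ (col' _ B))); last first.
  move=> i j j_lt; rewrite !mxE B_a /=; last by rewrite /bump (leqNgt k j) j_lt ltnW.
  by rewrite /bump ltnNge -ltnS ltn_ord (leqNgt k j) j_lt.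
rewrite /= addSn addnn -signr_odd /= odd_double expr1 mulN1r mulrN -mulNr mulr_sumr.
apply: eq_bigr => i _; rewrite !mxE (subSn (ltn_ord i : (i <= k)%N)) exprS !mulrA.
congr (_ * B _ _ * _); apply/val_inj; first exact: lift_max.
by rewrite /= /bump leqnn.
Qed.

Lemma hess_minor_rec k :
  hess_minor a k.+1 = \sum_(i < k.+1) (- s) ^+ (k - i) * a i k * hess_minor a i.
Proof.
rewrite {1}/hess_minor (@det_hess_lastcol k) => [|i j _]; last by rewrite mxE.
by apply: eq_bigr => i _; rewrite mxE.
Qed.

End HessenbergDeterminant.

Fixpoint chain_count (R : pzSemiRingType) (w : nat -> nat -> R) (j k : nat) : R :=
  if j is j'.+1 then
    if k is k'.+1 then \sum_(i < k'.+1) w i k' * chain_count w j' i else 0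
  else (k == 0%N)%:R.

Section ChainCount.

Variables (R : pzSemiRingType) (w : nat -> nat -> R).

Lemma chain_count_gt j k : (k < j)%N -> chain_count w j k = 0.
Proof.
elim: j k => [|j IHj] [|k] //= k_lt.
by rewrite big1 // => i _; rewrite IHj ?mulr0 // (leq_trans (ltn_ord i)).
Qed.

Lemma chain_count1 k : chain_count w 1 k.+1 = w 0%N k.
Proof.
by rewrite /= big_ord_recl /= mulr1 big1 ?addr0 // => i _; rewrite mulr0.
Qed.

Lemma chain_countSS j k :
  chain_count w j.+2 k.+1 = \sum_(i < k) w i.+1 k * chain_count w j.+1 i.+1.
Proof. by rewrite [LHS]/= big_ord_recl /= mulr0 add0r. Qed.

End ChainCount.

Lemma natr_chain_count (R : pzSemiRingType) (b : nat -> nat -> nat) j k :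
  (chain_count b j k)%:R = chain_count (fun i l => (b i l)%:R) j k :> R.
Proof.
elim: j k => [|j IHj] [|k] //=.
by rewrite natr_sum; apply: eq_bigr => i _; rewrite natrM IHj.
Qed.

Section HessenbergCoefficients.

Variables (R : comNzRingType) (s : R) (w : nat -> nat -> R) (a : nat -> nat -> {poly R}).
Hypothesis a_subdiag : forall j, a j.+1 j = s%:P.
Hypothesis a_below : forall i j, (j.+1 < i)%N -> a i j = 0.
Hypothesis a_upper : forall i j, (i <= j)%N -> a i j = w i j *: 'X.

Lemma coef_hess_minor k j :
  (hess_minor a k)`_j = (- s) ^+ (k - j) * chain_count w j k.
Proof.
elim/ltn_ind: k j => -[|k] IHk j.
  by rewrite /hess_minor det_mx00 coef1; case: j => [|j]; rewrite ?mulr1 ?mulr0.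
rewrite (hess_minor_rec a_subdiag a_below) coef_sum.
have term_eq (i : 'I_k.+1) : (- s%:P) ^+ (k - i) * a i k * hess_minor a i =
    'X * (((- s) ^+ (k - i) * w i k) *: hess_minor a i).
  rewrite a_upper; last exact: ltn_ord i.
  by rewrite -!mul_polyC rmorphM rmorphXn rmorphN mulrA [_ * 'X]mulrC -!mulrA.
under eq_bigr => i _ do rewrite term_eq coefXM coefZ.
case: j => [|j]; first by rewrite big1 ?mulr0.
rewrite subSS /= mulr_sumr; apply: eq_bigr => i _.
rewrite IHk //; have [j_le|i_lt] := leqP j i; last by rewrite chain_count_gt ?mulr0.
have -> : (k - j = (k - i) + (i - j))%N by have := ltn_ord i; lia.
by rewrite exprD -!mulrA; congr (_ * _); exact: mulrCA.
Qed.

End HessenbergCoefficients.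

Lemma leq_mul_halves X Y m : (X + Y <= m)%N -> (X * Y <= m.+1./2 * m./2)%N.
Proof.
move=> XY_le; have AGM := (nat_AGM2 X Y).1.
have : ((X + Y) ^ 2 <= m ^ 2)%N by rewrite leq_exp2r.
rewrite -uphalfE uphalf_half -{1}(odd_double_half m).
by case: (odd m) => /=; nia.
Qed.

Lemma leq_sum_ord_widen (f : nat -> nat) i m :
  (i <= m)%N -> (\sum_(k < i) f k <= \sum_(k < m) f k)%N.
Proof.
by move=> i_le; rewrite -!(big_mkord xpredT) (big_cat_nat (leq0n i) i_le) leq_addr.
Qed.

Section ZeroOneChains.

Variable b : nat -> nat -> nat.
Hypothesis b_le1 : forall i j, (b i j <= 1)%N.

Lemma chain_count3_le m :
  chain_count b 2 m.+1 = 0%N -> (chain_count b 3 m.+1 <= m.+1./2 * m./2)%N.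
Proof.
rewrite chain_countSS => /eqP; rewrite sum_nat_eq0 => /forallP no_2chain.
set X := (\sum_(i < m) b 0%N i)%N; set Y := (\sum_(i < m) b i.+1 m)%N.
have XY_le : (X + Y <= m)%N.
  rewrite -big_split /= -[m in leqRHS]card_ord -sum1_card; apply: leq_sum => i _.
  move: (no_2chain i); rewrite chain_count1 muln_eq0.
  by case/orP=> /eqP ->; rewrite ?addn0 ?add0n b_le1.
apply: leq_trans (leq_mul_halves XY_le); rewrite mulnC chain_countSS big_distrl.
apply: leq_sum => i _; apply: leq_mul => //; rewrite chain_countSS.
apply: leq_trans (leq_sum_ord_widen _ (ltnW (ltn_ord i))); apply: leq_sum => k _.
by rewrite chain_count1 -[leqRHS]mul1n leq_mul.
Qed.

End ZeroOneChains.

Lemma coef_signXn_mulC (R : comNzRingType) r (c : R) :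
  ((- 'X) ^+ r * c%:P)`_r = (-1) ^+ r * c.
Proof.
by rewrite coefMC -scaleN1r exprZn coefZ coefXn eqxx mulr1.
Qed.

(* Outside the matrix the Hessenberg pattern is continued with no t-entries, so
   the hypotheses on the entries can be stated for all indices. *)
Definition ext_entry n (A : 'M[Zst]_n.+1) (i j : nat) : Zst :=
  if ((i < n.+1) && (j < n.+1))%N then A (inord i) (inord j)
  else if j.+1 == i then var_s else 0.

Definition t_pattern n (A : 'M[Zst]_n.+1) (i j : nat) : nat :=
  ext_entry A i j == var_t.

Section MatricesInG.

Variables (n : nat) (A : 'M[Zst]_n.+1).
Hypothesis A_G : in_G_st A.

Lemma ext_entry_subdiag j : ext_entry A j.+1 j = var_s.
Proof.
rewrite /ext_entry; case: ifP => [/andP[i_lt j_lt]|]; last by rewrite eqxx.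
by have [-> //] := A_G (inord j.+1) (inord j); rewrite !inordK.
Qed.

Lemma ext_entry_below i j : (j.+1 < i)%N -> ext_entry A i j = 0.
Proof.
move=> lt_ji; rewrite /ext_entry; case: ifP => [/andP[i_lt j_lt]|_].
  by have [_ [-> //]] := A_G (inord i) (inord j); rewrite !inordK.
by rewrite ltn_eqF.
Qed.

Lemma ext_entry_upper i j : (i <= j)%N -> ext_entry A i j = (t_pattern A i j)%:R *: 'X.
Proof.
move=> le_ij; rewrite /t_pattern /ext_entry; case: ifP => [/andP[i_lt j_lt]|_].
  have [_ [_ ]] := A_G (inord i) (inord j); rewrite !inordK // => /(_ le_ij).
  by case=> ->; rewrite ?eqxx ?scale1r // eq_sym polyX_eq0 scale0r.
by rewrite gtn_eqF ?ltnS // eq_sym polyX_eq0 scale0r.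
Qed.

Lemma det_hess_ext_entry : \det A = hess_minor (ext_entry A) n.+1.
Proof.
by congr (\det _); apply/matrixP => i j; rewrite mxE /ext_entry !ltn_ord !inord_val.
Qed.

Lemma coef_det_G j :
  coef_st (\det A) (n.+1 - j) j = (-1) ^+ (n.+1 - j) * (chain_count (t_pattern A) j n.+1)%:R.
Proof.
rewrite /coef_st det_hess_ext_entry.
rewrite (coef_hess_minor ext_entry_subdiag ext_entry_below ext_entry_upper).
by rewrite -natr_chain_count -polyC_natr coef_signXn_mulC.
Qed.

End MatricesInG.

Theorem lemma5p6 (n : nat) (A : 'M[Zst]_n) :
  (3 <= n)%N -> in_G_st A ->
  coef_st (\det A) (n - 2) 2 = 0 ->
  (absz (coef_st (\det A) (n - 3) 3) <= n./2 * (n.-1)./2)%N.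
Proof.
case: n A => [|m] A // _ A_G.
rewrite !(coef_det_G A_G) => /eqP.
rewrite mulf_eq0 signr_eq0 pnatr_eq0 => /eqP no_2chain.
rewrite abszMsign natz absz_nat; apply: chain_count3_le no_2chain => i j.
exact: leq_b1.
Qed.
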